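(* Let $n\ge2$, $d\ge1$, $r\ge3$ with $dr=n$. For every vertex $(a,x)$ of $Q_n(d,r)$ with $x\in\{0,\dots,r-1\}$, the distance between $(0_n,0)$ and $(a,x)$ in $Q_n(d,r)$ is $$\mathrm{dist}((0_n,0),(a,x))=\|a\|+\min\{\,r+x-2\,\mathrm{leap}_1(a,x),\; 2r-x-2\,\mathrm{leap}_2(a,x)\,\}.$$
   Context: $\mathbb{Z}_2^n=\{0,1\}^n$ with coordinatewise addition mod 2; $e_i$ is the $i$-th standard basis vector, subscripts read modulo $n$; $\|a\|$ is the Hamming weight. The recursive cube of rings $Q_n(d,r)$ (for $n\ge d$, $dr\equiv0\pmod n$) is the simple graph on $\mathbb{Z}_2^n\times\mathbb{Z}_r$ in which $(a,x)$ is adjacent to $(a+e_{i+dx},x)$ for $1\le i\le d$ and to $(a,x\pm1)$. Definition of the leaps (case $dr=n$): for $(a,x)$ with $x\in\{0,\dots,r-1\}$, let $L$ be the non-decreasing list obtained by sorting the multiset consisting of $0$, $x$, $r$, and the numbers $\lfloor (i-1)/d\rfloor$ for each $i\in\{1,\dots,n\}$ with $a_i=1$. Then $\mathrm{leap}_1(a,x)=0$ if $x=0$, and otherwise $\mathrm{leap}_1(a,x)$ is the maximum difference between two consecutive entries of $L$ that are both $\le x$; $\mathrm{leap}_2(a,x)$ is the maximum difference between two consecutive entries of $L$ that are both $\ge x$. *)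

From mathcomp Require Import all_boot all_order.
Set Implicit Arguments. Unset Strict Implicit. Unset Printing Implicit Defensive.

(* Vertices of Q_n(d,r): Z_2^n x Z_r, as (bit vector indexed by 'I_n, x : 'I_r).
   Coordinates are 0-based: paper's coordinate i (1..n) is index i-1. *)
Definition Qvert (n r : nat) := ({ffun 'I_n -> bool} * 'I_r)%type.

Definition flipb n (a : {ffun 'I_n -> bool}) (k : nat) : {ffun 'I_n -> bool} :=
  [ffun i => a i (+) (val i == k)].

(* Adjacency: (a,x) ~ (a + e_{i+dx}, x) for 1<=i<=d (subscripts mod n), i.e.
   0-based index (j + d*x) mod n for j < d; and (a,x) ~ (a, x +- 1 mod r). *)
Definition Qadj (n d r : nat) : rel (Qvert n r) :=
  fun u v =>
    ((u.2 == v.2) && [exists j : 'I_d, v.1 == flipb u.1 ((j + d * u.2) %% n)])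
    || ((u.1 == v.1) &&
        ((val v.2 == (u.2 + 1) %% r) || (val u.2 == (v.2 + 1) %% r))).

Definition is_distance (T : eqType) (e : rel T) (u v : T) (k : nat) : Prop :=
  (exists p : seq T, [/\ path e u p, last u p = v & size p = k]) /\
  (forall p : seq T, path e u p -> last u p = v -> k <= size p).

Definition hweight n (a : {ffun 'I_n -> bool}) : nat := #|[pred i | a i]|.

(* The sorted list L: 0, x, r, and floor((i-1)/d) for each (1-based) i with a_i = 1 *)
Definition leapL n d r (a : {ffun 'I_n -> bool}) (x : nat) : seq nat :=
  sort leq ([:: 0; x; r] ++ [seq (val i) %/ d | i <- enum 'I_n & a i]).

Definition consec (s : seq nat) : seq (nat * nat) := zip s (behead s).

Definition leap1 n d r (a : {ffun 'I_n -> bool}) (x : nat) : nat :=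
  if x == 0 then 0 else
  \max_(p <- consec (leapL d r a x) | (p.1 <= x) && (p.2 <= x)) (p.2 - p.1).

Definition leap2 n d r (a : {ffun 'I_n -> bool}) (x : nat) : nat :=
  \max_(p <- consec (leapL d r a x) | (x <= p.1) && (x <= p.2)) (p.2 - p.1).

From mathcomp Require Import all_boot all_order zify.
Set Implicit Arguments. Unset Strict Implicit. Unset Printing Implicit Defensive.

(* Let [Phi (a, x) = |a| + cost a x], where [cost a x] is the length of a
   shortest walk on the cycle [Z_r] from [0] to [x] visiting every block
   [k = floor (i / d)] with [a_i = 1]; [leap1] and [leap2] are the widest
   gaps between visited positions below and above [x], so [cost] is the
   minimum in the statement. Along an edge [Phi] grows by at most one: a
   flip at [(a, x)] changes [|a|] by one and only toggles block [x], which
   does not affect [cost a x]; a ring step moves the endpoint of the walk by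
   one. [Phi] vanishes at the origin, and every other vertex has a neighbour
   with smaller [Phi]: clear a [1] in the current block, or else step back
   along an optimal walk ending at [x]. Hence [Phi] is the distance from the origin. *)

Definition gap (S : pred nat) (p q : nat) : Prop := forall s, S s -> ~~ (p < s < q).

Lemma gap_sub S p q p' q' : gap S p q -> p <= p' -> q' <= q -> gap S p' q'.
Proof. by move=> g pp' q'q s /g; apply: contra => /andP[? ?]; lia. Qed.

Lemma gap_short S p q : q <= p.+1 -> gap S p q.
Proof. by move=> hq s _; apply/negP => /andP[? ?]; lia. Qed.

Lemma gap_extendr S p q : gap S p q -> ~~ S q -> gap S p q.+1.
Proof.
move=> g nSq s Ss; apply/negP => /andP[ps sq].
have [{}sq|esq] : s < q \/ s = q by lia.
  by move: (g s Ss); rewrite ps sq.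
by move: nSq; rewrite -esq Ss.
Qed.

Lemma gap_extendl S p q : gap S p.+1 q -> ~~ S p.+1 -> gap S p q.
Proof.
move=> g nSp s Ss; apply/negP => /andP[ps sq].
have [{}ps|esp] : p.+1 < s \/ s = p.+1 by lia.
  by move: (g s Ss); rewrite ps sq.
by move: nSp; rewrite -esp Ss.
Qed.

Lemma gap_eq_off (S S' : pred nat) x p q : (forall y, y != x -> S' y -> S y) ->
  gap S p q -> q <= x \/ x <= p -> gap S' p q.
Proof.
move=> S'S g hx s S's; case: (eqVneq s x) => [->|sx].
  by apply/negP => /andP[? ?]; lia.
exact: g (S'S s sx S's).
Qed.

(* [cover_cost r S x c]: [c] is the length of a shortest walk on the cycle
   [Z_r] from [0] to [x] visiting every point of [S]. Such a walk leaves out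
   one [S]-free arc [[p, q]]: below [x] it costs [r + x - 2 (q - p)], above
   [x] it costs [2 r - x - 2 (q - p)]. *)
Definition cover_cost (r : nat) (S : pred nat) (x c : nat) : Prop :=
  (exists p q, gap S p q /\
    ([/\ p <= q, q <= x & c = r + x - 2 * (q - p)] \/
     [/\ x <= p, p <= q, q <= r & c = 2 * r - x - 2 * (q - p)])) /\
  (forall p q, gap S p q -> p <= q ->
    (q <= x -> c <= r + x - 2 * (q - p)) /\
    (x <= p -> q <= r -> c <= 2 * r - x - 2 * (q - p))).

Lemma cover_cost_unique r S x c c' :
  cover_cost r S x c -> cover_cost r S x c' -> c = c'.
Proof.
move=> [[p [q [g w]]] hb] [[p' [q' [g' w']]] hb'].
case: w => [[pq qx e]|[xp pq qr e]];
  case: w' => [[pq' qx' e']|[xp' pq' qr' e']];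
  have [b1 b2] := hb p' q' g' pq'; have [b1' b2'] := hb' p q g pq.
- by have := b1 qx'; have := b1' qx; lia.
- by have := b2 xp' qr'; have := b1' qx; lia.
- by have := b1 qx'; have := b2' xp qr; lia.
- by have := b2 xp' qr'; have := b2' xp qr; lia.
Qed.

Lemma cover_cost_eq_off r (S S' : pred nat) x c :
  (forall y, y != x -> S y = S' y) -> cover_cost r S x c -> cover_cost r S' x c.
Proof.
move=> eqS [[p [q [g w]]] hb].
have S'S y : y != x -> S' y -> S y by move=> /eqS ->.
have SS' y : y != x -> S y -> S' y by move=> /eqS <-.
split.
  exists p, q; split=> //; apply: gap_eq_off S'S g _.
  by case: w => [[_ ? _]|[? _ _ _]]; [left|right].
move=> p' q' g' pq'; split=> [qx | xp].
  by apply: (hb p' q' _ pq').1 => //; apply: gap_eq_off SS' g' _; left.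
by apply: (hb p' q' _ pq').2 => //; apply: gap_eq_off SS' g' _; right.
Qed.

Definition ring_adj (r y z : nat) : bool := (z == (y + 1) %% r) || (y == (z + 1) %% r).

Lemma ring_adjC r y z : ring_adj r y z = ring_adj r z y.
Proof. exact: orbC. Qed.

Lemma ring_adj_succ r y : y.+1 < r -> ring_adj r y y.+1.
Proof. by move=> hy; rewrite /ring_adj addn1 modn_small ?eqxx. Qed.

Lemma ring_adj_wrap r : 0 < r -> ring_adj r r.-1 0.
Proof. by move=> hr; rewrite /ring_adj addn1 prednK ?modnn ?eqxx. Qed.

Lemma ring_adj_cases r y z : y < r -> z < r -> ring_adj r y z ->
  [\/ z = y.+1, y = z.+1, y.+1 = r /\ z = 0 | z.+1 = r /\ y = 0].
Proof.
move=> hy hz /orP[] /eqP; rewrite addn1.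
  have [hy1|hy1] : y.+1 < r \/ y.+1 = r by lia.
    by rewrite modn_small //; constructor 1.
  by rewrite hy1 modnn; constructor 3.
have [hz1|hz1] : z.+1 < r \/ z.+1 = r by lia.
  by rewrite modn_small //; constructor 2.
by rewrite hz1 modnn; constructor 4.
Qed.

Lemma ring_adj_pred r x : 0 < x -> x < r -> ring_adj r x.-1 x.
Proof. by move=> x0 xr; rewrite -{2}(prednK x0) ring_adj_succ ?prednK. Qed.

Section RingCost.
Variables (r : nat) (S : pred nat) (cf : nat -> nat).
Hypothesis cf_cost : forall y, y < r -> cover_cost r S y (cf y).

Lemma cf_below y p q : y < r -> gap S p q -> p <= q -> q <= y ->
  cf y <= r + y - 2 * (q - p).
Proof. by move=> /cf_cost[_ hb] g pq; apply: (hb p q g pq).1. Qed.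

Lemma cf_above y p q : y < r -> gap S p q -> y <= p -> p <= q -> q <= r ->
  cf y <= 2 * r - y - 2 * (q - p).
Proof. by move=> /cf_cost[_ hb] g yp pq; apply: (hb p q g pq).2. Qed.

Lemma cf_succ y : y.+1 < r -> cf y.+1 <= (cf y).+1 /\ cf y <= (cf y.+1).+1.
Proof.
move=> hy; have hy0 := ltnW hy.
have [[p [q [g w]]] _] := cf_cost hy0.
have [[p' [q' [g' w']]] _] := cf_cost hy.
split.
- case: w => [[pq qy ->]|[yp pq qr ->]].
    by have := cf_below hy g pq (leqW qy); lia.
  have [yp'|ep] : y < p \/ p = y by lia.
    by have := cf_above hy g yp' pq qr; lia.
  subst p; have [yq|qy] : y < q \/ q = y by lia.
    by have := cf_above hy (gap_sub g (leqnSn y) (leqnn q)) (leqnn _) yq qr; lia.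
  by have := cf_above hy (gap_short (leqnSn y.+1)) (leqnn _) (leqnn _) (ltnW hy); lia.
- case: w' => [[pq qy ->]|[yp pq qr ->]].
    case: (ltnP y q') => [yq|qy'].
      case: (ltnP y p') => [yp|py].
        by have := cf_below hy0 (gap_short (leqnSn y)) (leqnn y) (leqnn y); lia.
      by have := cf_below hy0 (gap_sub g' (leqnn p') (ltnW yq)) py (leqnn y); lia.
    by have := cf_below hy0 g' pq qy'; lia.
  by have := cf_above hy0 g' (ltnW yp) pq qr; lia.
Qed.

Lemma cf_wrap : 0 < r -> cf 0 <= (cf r.-1).+1 /\ cf r.-1 <= (cf 0).+1.
Proof.
move=> hr; have hr1 : r.-1 < r by rewrite prednK.
have [[p [q [g w]]] _] := cf_cost hr1.
have [[p' [q' [g' w']]] _] := cf_cost hr.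
split.
- case: w => [[pq qr ->]|[rp pq qr ->]].
    by have := cf_above hr g (leq0n p) pq (leq_trans qr (leq_pred r)); lia.
  by have := cf_below hr (gap_short (leqnSn 0)) (leqnn 0) (leqnn 0); lia.
- case: w' => [[pq q0 ->]|[_ pq qr ->]].
    by have := cf_above hr1 (gap_short (leqnSn r)) (leq_pred r) (leqnn r) (leqnn r); lia.
  case: (ltnP q' r) => [qr'|rq].
    by have := cf_below hr1 g' pq (_ : q' <= r.-1); lia.
  case: (ltnP p' r) => [pr|rp].
    have g'' := gap_sub g' (leqnn p') (leq_trans (leq_pred r) rq).
    by have := cf_below hr1 g'' (_ : p' <= r.-1) (leqnn _); lia.
  by have := cf_below hr1 (gap_short (leqnSn 0)) (leqnn 0) (leq0n _); lia.
Qed.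

Lemma cf_ring_lipschitz y z : y < r -> z < r -> ring_adj r y z -> cf z <= (cf y).+1.
Proof.
move=> hy hz /(ring_adj_cases hy hz)[ez | ey | [ey ->] | [ez ->]].
- by subst z; exact: (cf_succ hz).1.
- by subst y; exact: (cf_succ hy).2.
- by have := (cf_wrap (leq_ltn_trans (leq0n y) hy)).1; rewrite -ey.
- by have := (cf_wrap (leq_ltn_trans (leq0n z) hz)).2; rewrite -ez.
Qed.

Hypothesis S_lt : forall s, S s -> s < r.

Lemma cf_descent_below x p q : x < r -> ~~ S x -> gap S p q -> p <= q -> q <= x ->
  cf x = r + x - 2 * (q - p) ->
  exists2 y, y < r & ring_adj r y x /\ (cf y).+1 <= cf x.
Proof.
move=> hx nSx g pq qx ->.
have [qx'|eqx] : q < x \/ q = x by lia.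
  have x0 : 0 < x by lia.
  exists x.-1; first lia.
  split; first exact: ring_adj_pred.
  by have := cf_below (_ : x.-1 < r) g pq (_ : q <= x.-1); lia.
subst q; have g' := gap_extendr g nSx.
have [hx1|ex] : x.+1 < r \/ x.+1 = r by lia.
  exists x.+1 => //; split; first by rewrite ring_adjC ring_adj_succ.
  by have := cf_below hx1 g' (leqW pq) (leqnn _); lia.
have r0 : 0 < r by lia.
exists 0 => //; split.
  by rewrite ring_adjC (_ : x = r.-1) ?ring_adj_wrap //; lia.
by rewrite ex in g'; have := cf_above r0 g' (leq0n p) (_ : p <= r) (leqnn r); lia.
Qed.

Lemma cf_descent_above x p q : x < r -> ~~ S x -> (0 < x \/ exists s, S s) ->
  gap S p q -> x <= p -> p <= q -> q <= r -> cf x = 2 * r - x - 2 * (q - p) ->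
  exists2 y, y < r & ring_adj r y x /\ (cf y).+1 <= cf x.
Proof.
move=> hx nSx hS g xp pq qr ->.
have [xp'|exp] : x < p \/ x = p by lia.
  have [hx1|ex] : x.+1 < r \/ x.+1 = r by lia.
    exists x.+1 => //; split; first by rewrite ring_adjC ring_adj_succ.
    by have := cf_above hx1 g xp' pq qr; lia.
  have r0 : 0 < r by lia.
  exists 0 => //; split.
    by rewrite ring_adjC (_ : x = r.-1) ?ring_adj_wrap //; lia.
  by have := cf_below r0 (gap_short (leqnSn 0)) (leqnn 0) (leqnn 0); lia.
subst p; have [x0|ex] : 0 < x \/ x = 0 by lia.
  exists x.-1; first lia.
  split; first exact: ring_adj_pred.
  have g' : gap S x.-1 q by apply: gap_extendl; rewrite prednK.
  by have := cf_above (_ : x.-1 < r) g' (leqnn _) (_ : x.-1 <= q) qr; lia.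
subst x; have [qr'|eqr] : q < r \/ q = r by lia.
  have r0 : 0 < r by lia.
  exists r.-1; first lia.
  split; first exact: ring_adj_wrap.
  by have := cf_below (_ : r.-1 < r) g pq (_ : q <= r.-1); lia.
subst q; exfalso; case: hS => [//|[s Ss]].
have := g s Ss; have := S_lt Ss; case: (posnP s) => [s0|_ ->]; last by [].
by rewrite -s0 Ss in nSx.
Qed.

Lemma cf_descent x : x < r -> ~~ S x -> (0 < x \/ exists s, S s) ->
  exists2 y, y < r & ring_adj r y x /\ (cf y).+1 <= cf x.
Proof.
move=> hx nSx hS; have [[p [q [g w]]] _] := cf_cost hx.
case: w => [[pq qx e]|[xp pq qr e]].
  exact: cf_descent_below e.
exact: cf_descent_above e.
Qed.
End RingCost.

Definition max_gap (S : pred nat) (lo hi m : nat) : Prop :=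
  (exists p q, [/\ gap S p q, lo <= p, p <= q, q <= hi & q - p = m]) /\
  (forall p q, gap S p q -> lo <= p -> p <= q -> q <= hi -> q - p <= m).

Lemma cover_cost_max_gaps r S x m1 m2 : max_gap S 0 x m1 -> max_gap S x r m2 ->
  cover_cost r S x (minn (r + x - 2 * m1) (2 * r - x - 2 * m2)).
Proof.
move=> [[p1 [q1 [g1 _ pq1 qx1 e1]]] b1] [[p2 [q2 [g2 xp2 pq2 qr2 e2]]] b2].
split.
  case: (leqP (r + x - 2 * m1) (2 * r - x - 2 * m2)) => hm.
    by exists p1, q1; split=> //; left; split=> //; lia.
  by exists p2, q2; split=> //; right; split=> //; lia.
move=> p q g pq; split=> [qx | xp qr].
  by have := b1 p q g (leq0n p) pq qx; lia.
by have := b2 p q g xp pq qr; lia.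
Qed.

Lemma max_gap_sub (S S' : pred nat) lo hi m : (forall c, S c -> S' c) ->
  (forall c, S' c -> [|| S c, c <= lo | hi <= c]) ->
  max_gap S' lo hi m -> max_gap S lo hi m.
Proof.
move=> SS' S'S [[p [q [g lop pq qhi e]]] hb]; split.
  by exists p, q; split=> // s /SS'; apply: g.
move=> p' q' g' lop' pq' qhi'; apply: hb => // s /S'S /or3P[/g' // | ? | ?];
  by apply/negP => /andP[? ?]; lia.
Qed.

Lemma bigmax_seq_attained (I : eqType) (s : seq I) (P : pred I) (F : I -> nat) :
  \max_(i <- s | P i) F i = 0 \/
  exists2 i, (i \in s) && P i & F i = \max_(i <- s | P i) F i.
Proof.
rewrite big_seq_cond; elim/big_ind: _ => [|m1 m2 h1 h2|i hi]; [by left| |by right; exists i].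
by case: leqP.
Qed.

Lemma consec_cons (h h' : nat) t : consec [:: h, h' & t] = (h, h') :: consec (h' :: t).
Proof. by []. Qed.

Lemma mem_consec s uv : uv \in consec s -> (uv.1 \in s) && (uv.2 \in s).
Proof.
elim: s => [|h [|h' t] IH] //; rewrite consec_cons inE => /orP[/eqP -> | /IH].
  by rewrite !inE !eqxx orbT.
by move=> /andP[h1 h2]; apply/andP; split; apply/predU1P; right.
Qed.

Lemma sorted_head_leq h t c : sorted leq (h :: t) -> c \in t -> h <= c.
Proof. by move=> /(order_path_min leq_trans)/allP; apply. Qed.

Lemma consec_gap s uv : sorted leq s -> uv \in consec s ->
  uv.1 <= uv.2 /\ gap (mem s) uv.1 uv.2.
Proof.
elim: s => [|h [|h' t] IH] // hs; have hs' := path_sorted hs.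
rewrite consec_cons inE => /orP[/eqP -> /= | uv_in].
  split; first by case/andP: hs.
  move=> c; rewrite inE => /orP[/eqP -> | c_in]; first by rewrite ltnn.
  have h'_le : h' <= c by case/predU1P: c_in => [-> | /(sorted_head_leq hs')].
  by rewrite (ltnNge c h') h'_le andbF.
have [le_uv g] := IH hs' uv_in; split=> // c; rewrite inE => /orP[/eqP -> | /g //].
have h_le : h <= uv.1 by apply: sorted_head_leq hs _; case/andP: (mem_consec uv_in).
by rewrite (ltnNge uv.1 h) h_le.
Qed.

Lemma consec_cover s a b p q : sorted leq s -> a \in s -> b \in s ->
  a <= p -> p < q -> q <= b -> gap (mem s) p q ->
  exists2 uv, uv \in consec s & [/\ a <= uv.1, uv.1 <= p, q <= uv.2 & uv.2 <= b].
Proof.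
elim: s a => [|h [|h' t] IH] a // hs.
  by rewrite !inE => /eqP -> /eqP ->; lia.
move=> a_in b_in ap pq qb g; have hs' := path_sorted hs.
have hh' : h <= h' by case/andP: hs.
have h_le c : c \in h' :: t -> h' <= c.
  by case/predU1P => [-> | /(sorted_head_leq hs')].
have b_in' : b \in h' :: t.
  case/predU1P: b_in => // eb; have ha : h <= a.
    by case/predU1P: a_in => [-> | /(sorted_head_leq hs)].
  lia.
rewrite consec_cons.
case: (leqP h' p) => [h'p | ph'].
  have [a' a'_in /andP[aa' a'p]] : exists2 a', a' \in h' :: t & a <= a' <= p.
    case/predU1P: a_in => [-> | a_in]; first by exists h'; rewrite ?inE ?eqxx ?hh'.
    by exists a; rewrite ?leqnn.
  have g' : gap (mem (h' :: t)) p q by move=> c c_in; apply: g; apply/predU1P; right.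
  have [uv uv_in uv_bnd] := IH a' hs' a'_in b_in' a'p pq qb g'.
  by exists uv; [rewrite inE uv_in orbT | case: uv_bnd => *; split => //; lia].
have qh' : q <= h'.
  by have := g h'; rewrite !inE eqxx orbT => /(_ isT); rewrite ph' /= -leqNgt.
have ea : a = h by case/predU1P: a_in => // /h_le; lia.
exists (h, h'); first by rewrite inE eqxx.
by split=> //=; [rewrite ea | lia | exact: h_le].
Qed.

Lemma max_gap_consec s (S : pred nat) (lo hi : nat) (P : pred (nat * nat)) :
  sorted leq s -> lo \in s -> hi \in s -> lo <= hi ->
  (forall c, S c -> c \in s) -> (forall c, c \in s -> [|| S c, c <= lo | hi <= c]) ->
  {in consec s, P =1 fun uv => (lo <= uv.1) && (uv.2 <= hi)} ->
  max_gap S lo hi (\max_(uv <- consec s | P uv) (uv.2 - uv.1)).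
Proof.
move=> hs lo_in hi_in lohi S_s s_S P_eq; apply: (max_gap_sub S_s s_S); split.
  case: (bigmax_seq_attained (consec s) P (fun uv => uv.2 - uv.1)) => [-> | [uv]].
    by exists lo, lo; split=> //; [exact: gap_short | rewrite subnn].
  move=> /andP[uv_in Puv] <-; have [le_uv g] := consec_gap hs uv_in.
  by move: Puv; rewrite P_eq // => /andP[lo_le le_hi]; exists uv.1, uv.2.
move=> p q g lop pq qhi; case: (ltnP p q) => [{}pq | qp]; last by rewrite (_ : q - p = 0) //; lia.
have [[u v] uv_in /= [lo_u up qv vhi]] := consec_cover hs lo_in hi_in lop pq qhi g.
have Puv : P (u, v) by rewrite P_eq // lo_u vhi.
by apply: leq_trans (leq_bigmax_seq _ uv_in Puv) => /=; lia.
Qed.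

Definition marked n d (a : {ffun 'I_n -> bool}) (k : nat) : bool :=
  [exists i : 'I_n, a i && (i %/ d == k)].

Lemma mem_leapL n d r (a : {ffun 'I_n -> bool}) x c :
  (c \in leapL d r a x) = [|| c == 0, c == x, c == r | marked d a c].
Proof.
rewrite /leapL mem_sort mem_cat !inE -!orbA; congr [|| _, _, _ | _].
apply/mapP/existsP => [[i] | [i /andP[ai /eqP <-]]].
  by rewrite mem_filter mem_enum andbT => ai ->; exists i; rewrite ai eqxx.
by exists i; rewrite // mem_filter mem_enum ai.
Qed.

Lemma marked_lt n d r (a : {ffun 'I_n -> bool}) c :
  0 < d -> d * r = n -> marked d a c -> c < r.
Proof.
move=> d0 dr /existsP[i /andP[_ /eqP <-]].
by rewrite ltn_divLR // mulnC dr ltn_ord.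
Qed.

Lemma leap1_max_gap n d r (a : {ffun 'I_n -> bool}) (x : nat) :
  x <= r -> max_gap (marked d a) 0 x (leap1 d r a x).
Proof.
move=> xr; rewrite /leap1; case: eqP => [-> | /eqP x0].
  split; first by exists 0, 0; split=> //; exact: gap_short.
  by move=> p q _ _ pq q0; lia.
have hs : sorted leq (leapL d r a x) := sort_sorted leq_total _.
apply: max_gap_consec; rewrite ?mem_leapL ?eqxx ?orbT //.
- by move=> c mc; rewrite mem_leapL mc !orbT.
- move=> c; rewrite mem_leapL => /or4P[/eqP -> | /eqP -> | /eqP -> | ->] //.
  + by rewrite leqnn orbT.
  + by rewrite leqnn !orbT.
  + by rewrite xr !orbT.
by move=> uv /(consec_gap hs)[le_uv _] /=; apply/andb_idl => /(leq_trans le_uv).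
Qed.

Lemma leap2_max_gap n d r (a : {ffun 'I_n -> bool}) (x : nat) :
  0 < d -> d * r = n -> x <= r -> max_gap (marked d a) x r (leap2 d r a x).
Proof.
move=> d0 dr xr; rewrite /leap2.
have hs : sorted leq (leapL d r a x) := sort_sorted leq_total _.
have L_le c : c \in leapL d r a x -> c <= r.
  rewrite mem_leapL => /or4P[/eqP -> | /eqP -> | /eqP -> | /(marked_lt d0 dr) /ltnW] //.
apply: max_gap_consec; rewrite ?mem_leapL ?eqxx ?orbT //.
- by move=> c mc; rewrite mem_leapL mc !orbT.
- move=> c; rewrite mem_leapL => /or4P[/eqP -> | /eqP -> | /eqP -> | ->] //.
  + by rewrite leq0n orbT.
  + by rewrite leqnn orbT.
  + by rewrite leqnn !orbT.
move=> uv uv_in /=; have [le_uv _] := consec_gap hs uv_in.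
have -> : uv.2 <= r by apply: L_le; case/andP: (mem_consec uv_in).
by rewrite andbT; apply/andb_idr => /leq_trans; apply.
Qed.

Lemma flipbK n (a : {ffun 'I_n -> bool}) k : flipb (flipb a k) k = a.
Proof. by apply/ffunP => i; rewrite !ffunE -addbA addbb addbF. Qed.

Lemma flipb_ne n (a : {ffun 'I_n -> bool}) (i j : 'I_n) : j != i -> flipb a i j = a j.
Proof. by move=> ji; rewrite ffunE (inj_eq val_inj) (negbTE ji) addbF. Qed.

Lemma hweight_flip n (a : {ffun 'I_n -> bool}) (i : 'I_n) :
  hweight (flipb a i) + a i = hweight a + ~~ a i.
Proof.
rewrite /hweight (cardD1 i) [in RHS](cardD1 i) !inE ffunE eqxx.
have -> : #|[predD1 [pred j | flipb a i j] & i]| = #|[predD1 [pred j | a j] & i]|.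
  by apply: eq_card => j; rewrite !inE; case: eqVneq => // /flipb_ne ->.
by case: (a i); rewrite /= ?addn0 ?add0n ?addn1.
Qed.

Lemma marked_flip n d (a : {ffun 'I_n -> bool}) (i : 'I_n) y : y != i %/ d ->
  marked d (flipb a i) y = marked d a y.
Proof.
move=> yi; apply: eq_existsb => j; case: (eqVneq j i) => [-> | /flipb_ne -> //].
by rewrite [_ == y]eq_sym (negbTE yi) !andbF.
Qed.

Lemma block_index d r (j : 'I_d) (x : 'I_r) : j + d * x < d * r /\ (j + d * x) %/ d = x.
Proof.
have d0 : 0 < d by apply: leq_ltn_trans (ltn_ord j).
split; first by have := ltn_ord j; have := ltn_ord x; nia.
by rewrite mulnC divnDMl // divn_small ?ltn_ord.
Qed.

Section CubeOfRings.
Variables n d r : nat.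
Hypotheses (d_gt0 : 0 < d) (r_gt0 : 0 < r) (dr : d * r = n).

Definition cost (a : {ffun 'I_n -> bool}) (y : nat) : nat :=
  minn (r + y - 2 * leap1 d r a y) (2 * r - y - 2 * leap2 d r a y).

Definition potential (v : Qvert n r) : nat := hweight v.1 + cost v.1 v.2.

Lemma cost_cover a y : y < r -> cover_cost r (marked d a) y (cost a y).
Proof.
move=> /ltnW yr; apply: cover_cost_max_gaps.
  exact: leap1_max_gap.
exact: leap2_max_gap.
Qed.

Lemma cost_flip a (i : 'I_n) : i %/ d < r -> cost (flipb a i) (i %/ d) = cost a (i %/ d).
Proof.
move=> ir; apply: cover_cost_unique (cost_cover _ ir) _.
by apply: cover_cost_eq_off (cost_cover _ ir) => y /marked_flip ->.
Qed.

Lemma potential_flip a (x : 'I_r) (i : 'I_n) : i %/ d = x ->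
  potential (flipb a i, x) + a i = potential (a, x) + ~~ a i.
Proof.
move=> ix; rewrite /potential /= -ix cost_flip ?ix //.
by have := hweight_flip a i; lia.
Qed.

Lemma block_of_edge (j : 'I_d) (x : 'I_r) :
  exists2 i : 'I_n, val i = (j + d * x) %% n & i %/ d = x.
Proof.
have [jx_lt jx_div] := block_index j x; rewrite dr in jx_lt.
by exists (Ordinal jx_lt); rewrite //= modn_small.
Qed.

Lemma potential_edge u v : Qadj d u v -> potential v <= (potential u).+1.
Proof.
case: u v => [a x] [b y]; rewrite /Qadj /=.
case/orP => [/andP[/eqP <- /existsP[j /eqP ->]] | /andP[/eqP <- adj]].
  have [i <- ix] := block_of_edge j x.
  by have := potential_flip a ix; case: (a i) => /=; lia.
have := cf_ring_lipschitz (cost_cover a) (ltn_ord x) (ltn_ord y) adj.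
by rewrite /potential /=; lia.
Qed.

Lemma potential_path u p : path (@Qadj n d r) u p ->
  potential (last u p) <= potential u + size p.
Proof.
elim: p u => [|v p IH] u /=; first by rewrite addn0.
by case/andP => /potential_edge uv /IH; lia.
Qed.

Variable x0 : 'I_r.
Hypothesis x0_eq0 : val x0 = 0.

Let origin : Qvert n r := ([ffun => false], x0).

Lemma potential_origin : potential origin = 0.
Proof.
pose a0 : {ffun 'I_n -> bool} := [ffun => false].
have w0 : hweight a0 = 0 by apply: eq_card0 => i; rewrite inE ffunE.
have g : gap (marked d a0) 0 r by move=> s /existsP[i]; rewrite ffunE.
have [_ hb] := cost_cover a0 r_gt0.
have := (hb 0 r g (leq0n r)).2 (leqnn 0) (leqnn r).
by rewrite /potential /= -/a0 w0 x0_eq0; lia.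
Qed.

Lemma potential_descent v : v != origin ->
  exists2 w, Qadj d w v & (potential w).+1 = potential v.
Proof.
case: v => a x v_ne.
suff [w wv lt_wv] : exists2 w, Qadj d w (a, x) & potential w < potential (a, x).
  by exists w => //; have := potential_edge wv; lia.
case marked_x: (marked d a x).
  case/existsP: marked_x => i /andP[ai /eqP ix].
  exists (flipb a i, x).
    apply/orP; left; rewrite eqxx /=; apply/existsP; exists (Ordinal (ltn_pmod i d_gt0)).
    by rewrite /= -ix addnC mulnC -divn_eq modn_small ?flipbK.
  have := potential_flip (flipb a i) ix; rewrite flipbK ffunE eqxx ai /=; lia.
have nonempty : 0 < x \/ exists s, marked d a s.
  case: (posnP x) => [x_eq0 | x_gt0]; last by left.
  case: (boolP [exists i, a i]) => [/existsP[i ai] | /existsPn no_a].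
    by right; exists (i %/ d); apply/existsP; exists i; rewrite ai eqxx.
  case/eqP: v_ne; congr pair; first by apply/ffunP => i; rewrite ffunE; apply/negbTE.
  by apply: val_inj; rewrite /= x_eq0 x0_eq0.
have [y y_lt [adj lt_y]] := cf_descent (cost_cover a) (fun s => marked_lt d_gt0 dr)
  (ltn_ord x) (negbT marked_x) nonempty.
exists (a, Ordinal y_lt); last by rewrite /potential /=; lia.
by apply/orP; right; rewrite eqxx.
Qed.

Lemma walk_of_potential v : exists p,
  [/\ path (@Qadj n d r) origin p, last origin p = v & size p = potential v].
Proof.
have [k pv] : exists k, potential v = k by exists (potential v).
elim: k v pv => [|k IH] v pv; case: (eqVneq v origin) => [ev | /potential_descent[w wv]].
- by subst v; exists [::]; rewrite potential_origin.
- by rewrite pv.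
- by subst v; rewrite potential_origin in pv.
- rewrite pv => -[pw]; have [p [p_path p_last p_size]] := IH w pw.
  exists (rcons p v).
  by rewrite rcons_path last_rcons size_rcons p_path p_last wv p_size pw.
Qed.

End CubeOfRings.

Unset Implicit Arguments.

Theorem mainTheorem7 (n d r : nat) (hn : 2 <= n) (hd : 1 <= d) (hr : 3 <= r)
  (hdr : d * r = n) (a : {ffun 'I_n -> bool}) (x : 'I_r) (x0 : 'I_r)
  (hx0 : val x0 = 0) :
  is_distance (@Qadj n d r) ([ffun => false], x0) (a, x)
    (hweight a +
     minn (r + x - 2 * leap1 d r a x) (2 * r - x - 2 * leap2 d r a x)).
Proof.
have r_gt0 : 0 < r by lia.
split; first by have [p] := walk_of_potential hd r_gt0 hdr hx0 (a, x); exists p.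
move=> p p_path p_last.
by have := potential_path hd r_gt0 hdr p_path; rewrite p_last potential_origin.
Qed.
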